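(* Let $a\ge b\ge2$ be integers with $a/b\in\mathbb Z$, $\beta>1$ the positive root of $\beta^2=a\beta+b$, and $\beta'=a-\beta$. Then for each $n\in\mathbb N$, \[ \inf_{j\in\mathbb Z}P_{\mathbf h(j)}(\beta')\in\Big\{\mu_n+(\beta')^{2n}\tfrac{b-1}{1-(\beta')^2}\,t:\ t\in[\beta',0]\Big\}, \qquad \mu_n=\min_{j\in\{0,1,\dots,b^n-1\}}P_{\mathrm{Pref}_{2n}(\mathbf h(j))}(\beta'). \]
   Context: For an algebraic integer $\beta$, the $\beta$-adic expansion of $x\in\mathbb Z[\beta]$ is the unique infinite word $\mathbf h(x)=u_0u_1u_2\cdots$ with $u_n\in\{0,1,\dots,|N(\beta)|-1\}$ such that $x-\sum_{i=0}^{n-1}u_i\beta^i\in\beta^n\mathbb Z[\beta]$ for all $n\in\mathbb N$; here $|N(\beta)|=b$. $\mathrm{Pref}_n(\mathbf u)$ denotes the prefix of length $n$ of an infinite word $\mathbf u$. For a finite word $w=w_0\cdots w_{k-1}$, $P_w(X)=\sum_{i=0}^{k-1}w_iX^i$; for an infinite word, $P_{\mathbf u}(X)=\sum_{i\ge0}u_iX^i$. *)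

From Stdlib Require Import Reals ZArith.
Open Scope R_scope.

Fixpoint sum_lt (f : nat -> R) (n : nat) : R :=
  match n with
  | O => 0
  | S k => sum_lt f k + f k
  end.

(* u is a beta-adic expansion of x in Z[beta] with digits in {0,...,b-1}:
   for all n, x - sum_{i<n} u_i beta^i lies in beta^n Z[beta],
   where Z[beta] = { p + q beta : p q in Z } (beta is quadratic). *)
Definition is_beta_expansion (beta : R) (b : Z) (x : R) (u : nat -> Z) : Prop :=
  (forall i, (0 <= u i < b)%Z) /\
  forall n : nat, exists p q : Z,
    x - sum_lt (fun i => IZR (u i) * beta ^ i) n = beta ^ n * (IZR p + IZR q * beta).

Definition P_pref (u : nat -> Z) (k : nat) (x : R) : R :=
  sum_lt (fun i => IZR (u i) * x ^ i) k.

Definition P_inf_is (u : nat -> Z) (x y : R) : Prop :=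
  infinite_sum (fun i => IZR (u i) * x ^ i) y.

Definition is_lower_bound (E : R -> Prop) (m : R) : Prop :=
  forall y, E y -> m <= y.

Definition is_glb (E : R -> Prop) (m : R) : Prop :=
  is_lower_bound E m /\ forall m', is_lower_bound E m' -> m' <= m.

From Stdlib Require Import Reals ZArith Lia Lra.
Open Scope R_scope.

(* Represent an element of Z[beta] by the pair (p, q) standing for p + q beta.  Its last
   digit is p mod b, and removing it and dividing by beta (using 1/beta = (beta - a)/b) is
   the integer map (p, q) |-> (q - a (p / b), p / b); irrationality of beta makes the
   expansion h(j) the orbit of (j, 0) under this map.  Because b | a, two steps of the map
   turn a perturbation b^N (x, y) into b^(N-1) (x', y') with x' = x mod b.  Hence the first
   2n digits of h(j) only depend on j mod b^n, and adding a multiple of b^N to j can make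
   digit 2N vanish without changing the earlier ones.

   For beta' in (-1, 0) and C = (b - 1)/(1 - beta'^2), the tail of P_h(j)(beta') after 2N
   digits lies in beta'^(2N) C [beta', 1].  This gives the lower bound mu_n + beta'^(2n) C beta'.
   Conversely, starting from a minimiser for mu_n and repeatedly zeroing the next even digit
   (the odd one then contributes a nonpositive term) gives values P_h(J)(beta') below
   mu_n + beta'^(2N) C for every N >= n, so the infimum is at most mu_n. *)

Section DigitDynamics.
Variables a b : Z.

Definition beta_step (s : Z * Z) : Z * Z := (snd s - a * (fst s / b), fst s / b)%Z.
Definition beta_state (s : Z * Z) (n : nat) : Z * Z := Nat.iter n beta_step s.
Definition beta_digit (s : Z * Z) (n : nat) : Z := (fst (beta_state s n) mod b)%Z.

Hypothesis b_neq0 : b <> 0%Z.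

Lemma beta_step_shift p q u v :
  beta_step (p + b * u, q + v)%Z =
  (fst (beta_step (p, q)) + (v - a * u), snd (beta_step (p, q)) + u)%Z.
Proof.
  unfold beta_step; simpl.
  rewrite (Z.mul_comm b u), Z.div_add by exact b_neq0.
  f_equal; ring.
Qed.

Hypothesis b_dvd_a : (b | a)%Z.

Lemma beta_state_shift N p q x y :
  (forall i, (i < 2 * N)%nat ->
     beta_digit (p + b ^ Z.of_nat N * x, q + b ^ Z.of_nat N * y)%Z i = beta_digit (p, q) i) /\
  exists X Y,
    beta_state (p + b ^ Z.of_nat N * x, q + b ^ Z.of_nat N * y)%Z (2 * N) =
      (fst (beta_state (p, q) (2 * N)) + X, snd (beta_state (p, q) (2 * N)) + Y)%Z /\
    (X mod b = x mod b)%Z.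
Proof.
  destruct b_dvd_a as [c a_eq].
  revert p q x y; induction N as [|N IH]; intros p q x y.
  - split; [intros; lia|]. exists x, y. now rewrite !Z.mul_1_l.
  - rewrite Nat2Z.inj_succ, Z.pow_succ_r by lia.
    set (B := (b ^ Z.of_nat N)%Z).
    destruct (beta_step (p, q)) as [p1 q1] eqn:E1.
    destruct (beta_step (p1, q1)) as [p2 q2] eqn:E2.
    set (y' := (y - c * x)%Z). set (x' := (x - a * y')%Z).
    assert (two_steps : beta_step (beta_step (p + b * B * x, q + b * B * y)%Z) =
                        (p2 + B * x', q2 + B * y')%Z).
    { replace (p + b * B * x)%Z with (p + b * (B * x))%Z by ring.
      rewrite beta_step_shift, E1; cbn [fst snd].
      replace (p1 + (b * B * y - a * (B * x)))%Z with (p1 + b * (B * y'))%Z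
        by (unfold y'; rewrite a_eq; ring).
      rewrite beta_step_shift, E2; cbn [fst snd].
      f_equal; unfold x'; ring. }
    destruct (IH p2 q2 x' y') as [IHdigit [X [Y [IHstate IHmod]]]].
    replace (2 * S N)%nat with (S (S (2 * N))) by lia.
    unfold beta_digit, beta_state in *.
    split.
    + intros [|[|i]] Hi.
      * cbn [fst]. rewrite <- Z.mul_assoc, Z.mul_comm. apply Z.mod_add; exact b_neq0.
      * change (Nat.iter 1 beta_step ?s) with (beta_step s).
        replace (p + b * B * x)%Z with (p + b * (B * x))%Z by ring.
        rewrite beta_step_shift, E1; cbn [fst].
        replace (p1 + (b * B * y - a * (B * x)))%Z with (p1 + (B * y') * b)%Z
          by (unfold y'; rewrite a_eq; ring).
        apply Z.mod_add; exact b_neq0.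
      * rewrite !Nat.iter_succ_r, two_steps, E1, E2. apply IHdigit. lia.
    + exists X, Y. rewrite !Nat.iter_succ_r, two_steps, E1, E2. split; [exact IHstate|].
      rewrite IHmod. unfold x'. rewrite a_eq.
      replace (x - c * b * y')%Z with (x + (- (c * y')) * b)%Z by ring.
      apply Z.mod_add; exact b_neq0.
Qed.

Lemma beta_digit_mod_pow j N i : (i < 2 * N)%nat ->
  beta_digit (j, 0%Z) i = beta_digit ((j mod b ^ Z.of_nat N)%Z, 0%Z) i.
Proof.
  intros Hi.
  destruct (beta_state_shift N (j mod b ^ Z.of_nat N) 0 (j / b ^ Z.of_nat N) 0) as [Hdigit _].
  rewrite <- (Hdigit i Hi), Z.mul_0_r, Z.add_0_l, Z.add_comm, <- Z.div_mod; [reflexivity|].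
  apply Z.pow_nonzero; lia.
Qed.

Lemma beta_digit_zero_extension j N : exists k,
  beta_digit (j + b ^ Z.of_nat N * k, 0)%Z (2 * N) = 0%Z /\
  forall i, (i < 2 * N)%nat -> beta_digit (j + b ^ Z.of_nat N * k, 0)%Z i = beta_digit (j, 0%Z) i.
Proof.
  set (P := fst (beta_state (j, 0%Z) (2 * N))).
  destruct (beta_state_shift N j 0 (- P) 0) as [Hdigit [X [Y [Hstate Hmod]]]].
  rewrite Z.mul_0_r, Z.add_0_l in Hdigit, Hstate.
  exists (- P)%Z. split; [|exact Hdigit].
  unfold beta_digit. rewrite Hstate; cbn [fst]. fold P.
  rewrite Zplus_mod, Hmod, <- Zplus_mod, Z.add_opp_diag_r. apply Zmod_0_l.
Qed.

End DigitDynamics.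

Section QuadraticInteger.
Variables (a b : Z) (beta : R).
Hypothesis b_pos : (0 < b)%Z.
Hypothesis b_le_a : (b <= a)%Z.
Hypothesis beta_pos : 0 < beta.
Hypothesis beta_root : beta ^ 2 = IZR a * beta + IZR b.

Lemma beta_between : IZR a < beta < IZR a + 1.
Proof.
  assert (0 < IZR b) by (apply IZR_lt; lia).
  assert (IZR b <= IZR a) by (apply IZR_le; lia).
  simpl in beta_root. split; nra.
Qed.

(* Descent: if B beta is an integer, so is B' beta with B' = B (beta - a), and 0 < beta - a < 1. *)
Lemma beta_irrational_multiple (B A : Z) : IZR B * beta = IZR A -> B = 0%Z.
Proof.
  remember (Z.abs_nat B) as k eqn:Hk. revert B A Hk.
  induction k as [k IH] using lt_wf_ind; intros B A Hk HBA.
  destruct beta_between as [Ha Ha1].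
  assert (HB' : IZR (A - a * B) = IZR B * (beta - IZR a)) by (rewrite minus_IZR, mult_IZR; lra).
  destruct (Z.eq_dec B 0) as [|HB0]; [assumption|].
  assert (Hlt : (Z.abs (A - a * B) < Z.abs B)%Z).
  { apply lt_IZR. rewrite !abs_IZR, HB', Rabs_mult, (Rabs_right (beta - IZR a)) by lra.
    assert (0 < Rabs (IZR B)) by (apply Rabs_pos_lt, not_0_IZR, HB0). nra. }
  assert (HA' : IZR (A - a * B) * beta = IZR (B * b)).
  { rewrite HB', mult_IZR. simpl in beta_root. nra. }
  assert (Hk_lt : (Z.abs_nat (A - a * B) < k)%nat)
    by (subst k; apply Nat2Z.inj_lt; rewrite !Nat2Z.inj_abs_nat; exact Hlt).
  specialize (IH _ Hk_lt _ _ eq_refl HA').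
  rewrite IH in HB'. exfalso.
  apply HB0, eq_IZR. apply (Rmult_eq_reg_r (beta - IZR a)); lra.
Qed.

Lemma beta_irrational (A B : Z) : IZR A + IZR B * beta = 0 -> A = 0%Z /\ B = 0%Z.
Proof.
  intros H.
  assert (HB : B = 0%Z) by (apply (beta_irrational_multiple B (- A)); rewrite opp_IZR; lra).
  subst B. split; [apply eq_IZR; simpl in H; lra | reflexivity].
Qed.

Lemma beta_expansion_step (x : R) (u : nat -> Z) (n : nat) (P Q P' Q' : Z) :
  (0 <= u n < b)%Z ->
  x - sum_lt (fun i => IZR (u i) * beta ^ i) n = beta ^ n * (IZR P + IZR Q * beta) ->
  x - sum_lt (fun i => IZR (u i) * beta ^ i) (S n) = beta ^ S n * (IZR P' + IZR Q' * beta) ->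
  u n = (P mod b)%Z /\ (P', Q') = beta_step a b (P, Q).
Proof.
  intros Hu E0 E1. simpl sum_lt in E1.
  assert (Hpow : beta ^ n <> 0) by (apply pow_nonzero; lra).
  assert (Hzero : beta ^ n * (IZR (P - u n - Q' * b) + IZR (Q - P' - a * Q') * beta) = 0).
  { rewrite !minus_IZR, !mult_IZR.
    transitivity (beta ^ n * IZR Q' * (beta ^ 2 - IZR a * beta - IZR b)).
    - simpl in E1 |- *. lra.
    - rewrite beta_root; ring. }
  destruct (Rmult_integral _ _ Hzero) as [|Hcoef]; [contradiction|].
  destruct (beta_irrational _ _ Hcoef) as [HP HQ].
  assert (HQ' : Q' = (P / b)%Z) by (apply (Z.div_unique _ _ _ (u n)); [left|]; lia).
  split.
  - apply (Z.mod_unique _ _ Q'); [left|]; lia.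
  - unfold beta_step; cbn [fst snd]. rewrite <- HQ'. f_equal. lia.
Qed.

Lemma beta_expansion_digit (x : Z) (u : nat -> Z) :
  is_beta_expansion beta b (IZR x) u -> forall n, u n = beta_digit a b (x, 0%Z) n.
Proof.
  intros [Hdigit Hexp].
  assert (Hstate : forall n, IZR x - sum_lt (fun i => IZR (u i) * beta ^ i) n =
    beta ^ n * (IZR (fst (beta_state a b (x, 0%Z) n)) +
                IZR (snd (beta_state a b (x, 0%Z) n)) * beta)).
  { induction n as [|n IH]; [simpl; ring|].
    destruct (Hexp (S n)) as [P' [Q' E1]].
    destruct (beta_expansion_step _ u n _ _ P' Q' (Hdigit n) IH E1) as [_ Hstep].
    rewrite <- surjective_pairing in Hstep.
    change (beta_state a b (x, 0%Z) (S n)) with (beta_step a b (beta_state a b (x, 0%Z) n)).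
    rewrite <- Hstep. exact E1. }
  intros n. destruct (Hexp (S n)) as [P' [Q' E1]].
  exact (proj1 (beta_expansion_step _ u n _ _ P' Q' (Hdigit n) (Hstate n) E1)).
Qed.
End QuadraticInteger.

Lemma sum_f_R0_P_pref (u : nat -> Z) (r : R) n :
  sum_f_R0 (fun i => IZR (u i) * r ^ i) n = P_pref u (S n) r.
Proof. unfold P_pref; induction n as [|n IH]; simpl in *; [ring|]. rewrite IH; reflexivity. Qed.

Lemma P_inf_is_cv (u : nat -> Z) (r y : R) :
  P_inf_is u r y <-> Un_cv (fun n => P_pref u (S n) r) y.
Proof. unfold P_inf_is, infinite_sum, Un_cv. setoid_rewrite sum_f_R0_P_pref. reflexivity. Qed.

Lemma cv_le_eventually (U : nat -> R) (l c : R) (N : nat) :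
  Un_cv U l -> (forall n, (N <= n)%nat -> U n <= c) -> l <= c.
Proof.
  intros HU Hle. apply Rnot_lt_le; intros Hc.
  destruct (HU (l - c)) as [M HM]; [lra|].
  specialize (HM (max M N) (Nat.le_max_l _ _)). specialize (Hle (max M N) (Nat.le_max_r _ _)).
  unfold Rdist in HM. apply Rabs_def2 in HM. lra.
Qed.

Lemma even_pow_pos (r : R) N : r <> 0 -> 0 < r ^ (2 * N).
Proof. intros. rewrite pow_mult. apply pow_lt. simpl. nra. Qed.

Definition tail_max (r : R) (b : Z) : R := (IZR b - 1) / (1 - r ^ 2).

Section DigitSeries.
Variables (r : R) (b : Z) (u : nat -> Z).
Hypothesis r_range : -1 < r < 0.
Hypothesis b_gt1 : (1 < b)%Z.
Hypothesis u_digit : forall i, (0 <= u i < b)%Z.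

Lemma tail_max_pos : 0 < tail_max r b.
Proof.
  assert (1 < IZR b) by (apply IZR_lt; lia).
  apply Rdiv_lt_0_compat; simpl; nra.
Qed.

(* r^N C and r^N C r are the values of the digit tails b-1, 0, b-1, 0, ... and
   0, b-1, 0, b-1, ... from position N. *)
Lemma P_pref_tail N L : exists t, r <= t <= 1 /\
  P_pref u (N + L) r = P_pref u N r + r ^ N * tail_max r b * t.
Proof.
  assert (HC := tail_max_pos).
  assert (HC1 : tail_max r b * (1 - r ^ 2) = IZR b - 1)
    by (unfold tail_max; field; simpl; nra).
  revert N; induction L as [|L IH]; intros N.
  - exists 0. rewrite Nat.add_0_r. split; [lra | ring].
  - destruct (IH (S N)) as [t [Ht Heq]].
    replace (N + S L)%nat with (S N + L)%nat by lia. rewrite Heq.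
    assert (Hu : 0 <= IZR (u N) <= IZR b - 1).
    { rewrite <- minus_IZR. split; apply IZR_le; specialize (u_digit N); lia. }
    assert (Hfrac : 0 <= IZR (u N) / tail_max r b <= 1 - r ^ 2).
    { split; [unfold Rdiv; apply Rmult_le_pos; [lra | left; apply Rinv_0_lt_compat, HC]|].
      apply (Rmult_le_reg_r (tail_max r b)); [exact HC|]. field_simplify; lra. }
    exists (IZR (u N) / tail_max r b + r * t). split.
    + simpl in Hfrac. split; nra.
    + unfold P_pref; simpl. field. lra.
Qed.

Lemma P_inf_exists : exists y, P_inf_is u r y.
Proof.
  assert (HC := tail_max_pos).
  set (U := fun n => P_pref u (S n) r).
  assert (Hnear : forall N n, (N <= n)%nat ->
            Rabs (U n - P_pref u N r) <= Rabs (r ^ N) * tail_max r b).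
  { intros N n Hn. destruct (P_pref_tail N (S n - N)) as [t [Ht Heq]].
    unfold U. replace (S n) with (N + (S n - N))%nat by lia. rewrite Heq.
    replace (P_pref u N r + r ^ N * tail_max r b * t - P_pref u N r)
      with (r ^ N * tail_max r b * t) by ring.
    rewrite !Rabs_mult, (Rabs_right (tail_max r b)) by lra.
    assert (Rabs t <= 1) by (apply Rabs_le; lra).
    assert (0 <= Rabs (r ^ N) * tail_max r b) by (apply Rmult_le_pos; [apply Rabs_pos | lra]).
    nra. }
  assert (Hcauchy : Cauchy_crit U).
  { intros eps Heps.
    destruct (pow_lt_1_zero r ltac:(rewrite Rabs_left; lra) (eps / (2 * tail_max r b)))
      as [N HN]; [apply Rdiv_lt_0_compat; lra|].
    exists N. intros n m Hn Hm. unfold Rdist.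
    assert (HK : Rabs (r ^ N) * tail_max r b < eps / 2).
    { specialize (HN N (le_n N)). apply (Rmult_lt_compat_r (tail_max r b)) in HN; [|exact HC].
      replace (eps / (2 * tail_max r b) * tail_max r b) with (eps / 2) in HN by (field; lra).
      exact HN. }
    replace (U n - U m) with ((U n - P_pref u N r) - (U m - P_pref u N r)) by ring.
    eapply Rle_lt_trans; [apply Rabs_triang|]. rewrite Rabs_Ropp.
    pose proof (Hnear N n Hn). pose proof (Hnear N m Hm). lra. }
  destruct (R_complete U Hcauchy) as [y Hy]. exists y. apply P_inf_is_cv, Hy.
Qed.

Lemma P_inf_bounds y N : P_inf_is u r y ->
  P_pref u (2 * N) r + r ^ (2 * N) * tail_max r b * r <= y <=
  P_pref u (2 * N) r + r ^ (2 * N) * tail_max r b.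
Proof.
  intros Hy.
  assert (HD : 0 < r ^ (2 * N) * tail_max r b)
    by (apply Rmult_lt_0_compat; [apply even_pow_pos; lra | apply tail_max_pos]).
  set (U := fun n => P_pref u (S n) r).
  assert (HU : Un_cv U y) by apply P_inf_is_cv, Hy.
  assert (Hnear : forall n, (2 * N <= n)%nat -> exists t, r <= t <= 1 /\
            U n = P_pref u (2 * N) r + r ^ (2 * N) * tail_max r b * t).
  { intros n Hn. unfold U. replace (S n) with (2 * N + (S n - 2 * N))%nat by lia.
    apply P_pref_tail. }
  split.
  - apply Ropp_le_cancel. apply (cv_le_eventually _ _ _ (2 * N) (CV_opp _ _ HU)).
    intros n Hn. destruct (Hnear n Hn) as [t [Ht Heq]]. unfold opp_seq. rewrite Heq. nra.
  - apply (cv_le_eventually _ _ _ (2 * N) HU).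
    intros n Hn. destruct (Hnear n Hn) as [t [Ht Heq]]. rewrite Heq. nra.
Qed.
End DigitSeries.

Lemma P_pref_ext (u v : nat -> Z) k x :
  (forall i, (i < k)%nat -> u i = v i) -> P_pref u k x = P_pref v k x.
Proof.
  unfold P_pref. induction k as [|k IH]; intros Huv; simpl; [reflexivity|].
  rewrite IH by (intros; apply Huv; lia). rewrite (Huv k) by lia. reflexivity.
Qed.

Lemma Z_range_argmin (g : Z -> R) (K : nat) : exists j0, (0 <= j0 <= Z.of_nat K)%Z /\
  forall j, (0 <= j <= Z.of_nat K)%Z -> g j0 <= g j.
Proof.
  induction K as [|K [j0 [Hj0 Hmin]]].
  - exists 0%Z. split; [lia|]. intros j Hj. replace j with 0%Z by lia. lra.
  - destruct (Rle_or_lt (g j0) (g (Z.of_nat (S K)))) as [Hle|Hlt].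
    + exists j0. split; [lia|]. intros j Hj.
      destruct (Z.eq_dec j (Z.of_nat (S K))) as [->|Hne]; [exact Hle | apply Hmin; lia].
    + exists (Z.of_nat (S K)). split; [lia|]. intros j Hj.
      destruct (Z.eq_dec j (Z.of_nat (S K))) as [->|Hne]; [lra|].
      specialize (Hmin j ltac:(lia)). lra.
Qed.

Lemma glb_exists (E : R -> Prop) :
  (exists y, E y) -> (exists lo, is_lower_bound E lo) -> exists m, is_glb E m.
Proof.
  intros [y Ey] [lo Hlo].
  destruct (completeness (fun z => E (- z))) as [l [Hub Hleast]].
  - exists (- lo). intros z Hz. specialize (Hlo _ Hz). lra.
  - exists (- y). rewrite Ropp_involutive. exact Ey.
  - exists (- l). split.
    + intros z Hz. assert (z' : E (- - z)) by (rewrite Ropp_involutive; exact Hz).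
      specialize (Hub _ z'). lra.
    + intros m' Hm'. enough (l <= - m') by lra.
      apply Hleast. intros z Hz. specialize (Hm' _ Hz). lra.
Qed.

Lemma le_of_le_add_geometric (x y K q : R) :
  Rabs q < 1 -> (forall L, x <= y + K * q ^ L) -> x <= y.
Proof.
  intros Hq Hle. apply Rnot_lt_le; intros Hlt.
  assert (HK : 0 < Rabs K + 1) by (pose proof (Rabs_pos K); lra).
  destruct (pow_lt_1_zero q Hq ((x - y) / (Rabs K + 1))) as [L HL];
    [apply Rdiv_lt_0_compat; lra|].
  specialize (HL L (le_n L)). specialize (Hle L).
  apply (Rmult_lt_compat_l (Rabs K + 1)) in HL; [|exact HK].
  replace ((Rabs K + 1) * ((x - y) / (Rabs K + 1))) with (x - y) in HL by (field; lra).
  assert (K * q ^ L <= Rabs K * Rabs (q ^ L)) by (rewrite <- Rabs_mult; apply Rle_abs).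
  pose proof (Rabs_pos (q ^ L)). nra.
Qed.

Lemma affine_param_between (m mu D r : R) :
  0 < D -> mu + D * r <= m <= mu -> exists t, r <= t <= 0 /\ m = mu + D * t.
Proof.
  intros HD Hm. exists ((m - mu) / D). split; [|field; lra].
  split; apply (Rmult_le_reg_l D); try exact HD; field_simplify; lra.
Qed.

Section MinimalPrefix.
Variables (a b : Z) (r : R) (h : Z -> nat -> Z).
Hypothesis b_gt1 : (1 < b)%Z.
Hypothesis b_dvd_a : (b | a)%Z.
Hypothesis r_range : -1 < r < 0.
Hypothesis h_digit : forall j i, h j i = beta_digit a b (j, 0%Z) i.

Lemma h_digit_range j i : (0 <= h j i < b)%Z.
Proof. rewrite h_digit. apply Z.mod_pos_bound. lia. Qed.

Lemma P_pref_mod_pow j N :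
  P_pref (h j) (2 * N) r = P_pref (h (j mod b ^ Z.of_nat N)%Z) (2 * N) r.
Proof.
  apply P_pref_ext. intros i Hi. rewrite !h_digit.
  apply beta_digit_mod_pow; [lia | exact b_dvd_a | exact Hi].
Qed.

Lemma P_pref_min n : exists mu,
  (exists j, (0 <= j < b ^ Z.of_nat n)%Z /\ mu = P_pref (h j) (2 * n) r) /\
  forall j, mu <= P_pref (h j) (2 * n) r.
Proof.
  assert (Hpow : (0 < b ^ Z.of_nat n)%Z) by (apply Z.pow_pos_nonneg; lia).
  destruct (Z_range_argmin (fun j => P_pref (h j) (2 * n) r) (Z.to_nat (b ^ Z.of_nat n - 1)))
    as [j0 [Hj0 Hmin]].
  rewrite Z2Nat.id in Hj0, Hmin by lia.
  exists (P_pref (h j0) (2 * n) r). split.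
  - exists j0. split; [lia | reflexivity].
  - intros j. rewrite (P_pref_mod_pow j). apply Hmin.
    pose proof (Z.mod_pos_bound j _ Hpow). lia.
Qed.

(* Extending j by a multiple of b^N sets digit 2N to 0; digit 2N+1 then only contributes a
   nonpositive term, since r^(2N+1) < 0. *)
Lemma P_pref_descend j N : exists J, P_pref (h J) (2 * S N) r <= P_pref (h j) (2 * N) r.
Proof.
  destruct (beta_digit_zero_extension a b ltac:(lia) b_dvd_a j N) as [k [Hzero Hsame]].
  exists (j + b ^ Z.of_nat N * k)%Z.
  replace (2 * S N)%nat with (S (S (2 * N))) by lia.
  assert (Hprefix : P_pref (h (j + b ^ Z.of_nat N * k)%Z) (2 * N) r = P_pref (h j) (2 * N) r).
  { apply P_pref_ext. intros i Hi. rewrite !h_digit. exact (Hsame i Hi). }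
  unfold P_pref in *. cbn [sum_lt]. rewrite Hprefix, h_digit, Hzero.
  assert (Hodd : r ^ S (2 * N) < 0)
    by (change (r ^ S (2 * N)) with (r * r ^ (2 * N));
        pose proof (even_pow_pos r N ltac:(lra)); nra).
  assert (0 <= IZR (h (j + b ^ Z.of_nat N * k)%Z (S (2 * N))))
    by (apply IZR_le, h_digit_range).
  nra.
Qed.

Lemma glb_le_P_pref m j0 N :
  is_glb (fun y => exists j, P_inf_is (h j) r y) m -> m <= P_pref (h j0) (2 * N) r.
Proof.
  intros [Hlower _].
  assert (Hdescend : forall L, exists J, P_pref (h J) (2 * (N + L)) r <= P_pref (h j0) (2 * N) r).
  { induction L as [|L [J HJ]].
    - exists j0. rewrite Nat.add_0_r. lra.
    - destruct (P_pref_descend J (N + L)) as [J' HJ']. exists J'.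
      rewrite Nat.add_succ_r. lra. }
  apply (le_of_le_add_geometric _ _ (r ^ (2 * N) * tail_max r b) (r ^ 2));
    [rewrite Rabs_right; simpl; nra|].
  intros L. destruct (Hdescend L) as [J HJ].
  destruct (P_inf_exists r b (h J) r_range b_gt1 (h_digit_range J)) as [y Hy].
  destruct (P_inf_bounds r b (h J) r_range b_gt1 (h_digit_range J) y (N + L) Hy) as [_ Hy_le].
  assert (m <= y) by (apply Hlower; exists J; exact Hy).
  rewrite Nat.mul_add_distr_l in HJ, Hy_le. rewrite pow_add in Hy_le. rewrite <- pow_mult.
  lra.
Qed.
End MinimalPrefix.

Theorem proposition6 (a b : Z) (hb : (2 <= b)%Z) (hba : (b <= a)%Z)
  (hdiv : (b | a)%Z)
  (beta : R) (hbeta1 : 1 < beta) (hroot : beta ^ 2 = IZR a * beta + IZR b)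
  (h : Z -> nat -> Z)
  (hh : forall j : Z, is_beta_expansion beta b (IZR j) (h j))
  (n : nat) :
  let beta' := IZR a - beta in
  exists m mu : R,
    is_glb (fun y => exists j : Z, P_inf_is (h j) beta' y) m /\
    ((exists j : Z, (0 <= j < b ^ Z.of_nat n)%Z /\ mu = P_pref (h j) (2 * n) beta') /\
     (forall j : Z, (0 <= j < b ^ Z.of_nat n)%Z -> mu <= P_pref (h j) (2 * n) beta')) /\
    exists t : R, beta' <= t <= 0 /\
      m = mu + beta' ^ (2 * n) * ((IZR b - 1) / (1 - beta' ^ 2)) * t.
Proof.
  intros r.
  assert (b_gt1 : (1 < b)%Z) by lia.
  assert (r_range : -1 < r < 0)
    by (pose proof (beta_between a b beta ltac:(lia) hba ltac:(lra) hroot); unfold r; lra).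
  assert (h_digit : forall j i, h j i = beta_digit a b (j, 0%Z) i)
    by (intros j; apply (beta_expansion_digit a b beta ltac:(lia) hba ltac:(lra) hroot), hh).
  destruct (P_pref_min a b r h b_gt1 hdiv h_digit n) as [mu [[j0 [Hj0 Hmu]] Hmin]].
  set (E := fun y => exists j, P_inf_is (h j) r y).
  assert (h_range := h_digit_range a b h b_gt1 h_digit).
  assert (Hlower : is_lower_bound E (mu + r ^ (2 * n) * tail_max r b * r)).
  { intros y [j Hy]. pose proof (P_inf_bounds r b (h j) r_range b_gt1 (h_range j) y n Hy).
    specialize (Hmin j). lra. }
  destruct (glb_exists E) as [m Hm].
  { destruct (P_inf_exists r b (h 0%Z) r_range b_gt1 (h_range 0%Z)) as [y Hy].
    exists y, 0%Z. exact Hy. }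
  { eexists; exact Hlower. }
  exists m, mu. split; [exact Hm|]. split.
  - split; [now exists j0 | intros j _; apply Hmin].
  - apply affine_param_between.
    + apply Rmult_lt_0_compat; [apply even_pow_pos; lra | apply (tail_max_pos r b r_range b_gt1)].
    + split; [apply Hm, Hlower|].
      rewrite Hmu. exact (glb_le_P_pref a b r h b_gt1 hdiv r_range h_digit m j0 n Hm).
Qed.
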